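(* Let $X$ be a stacked simplicial complex of dimension $d$ with a fixed stacking order, and let $f_1,\dots,f_p$ with $p\ge 2$ be a path in $X$. Let $f_i$ be the facet of this path which comes last in the stacking order, and let $v$ be its free vertex. Then either $f_i=f_1$ and $\{v\}=f_1\setminus f_2$, or $f_i=f_p$ and $\{v\}=f_p\setminus f_{p-1}$.
   Context: A simplicial complex $X$ on a finite vertex set $V$ is a family of subsets (faces) of $V$ closed under taking subsets, every element of $V$ lying in some face; facets are inclusion-maximal faces. $X$ is pure of dimension $d$ if every facet has $d+1$ elements; a codimension one face is a face with $d$ elements. $X$ is stacked if it is pure of some dimension $d$ and its facets can be ordered $F_0,F_1,\dots,F_k$ (a stacking order) such that for each $p\ge 1$, $F_p$ contains exactly one vertex $v_p$ not in $F_0\cup\dots\cup F_{p-1}$ (called the free vertex of $F_p$), and $F_p\setminus\{v_p\}\subseteq F_j$ for some $j<p$. A walk is a sequence of facets $f_1,\dots,f_p$ ($p\ge 1$) such that each $f_i\cap f_{i+1}$ has exactly $d$ elements; a path is a walk in which the faces $f_i\cap f_{i+1}$, $1\le i<p$, are pairwise distinct; it is a path from $f_1$ to $f_p$. *)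

From mathcomp Require Import all_boot.
Set Implicit Arguments. Unset Strict Implicit. Unset Printing Implicit Defensive.

Definition is_complex (T : finType) (X : {set {set T}}) : Prop :=
  (forall F G : {set T}, F \in X -> G \subset F -> G \in X) /\
  (forall v : T, exists2 F, F \in X & v \in F).

Definition facet (T : finType) (X : {set {set T}}) (F : {set T}) : bool :=
  (F \in X) && [forall G in X, (F \subset G) ==> (G == F)].

Definition pure (T : finType) (X : {set {set T}}) (d : nat) : Prop :=
  forall F, facet X F -> #|F| = d.+1.

Definition stacking_order (T : finType) (X : {set {set T}}) (s : seq {set T}) : Prop :=
  [/\ uniq s,
      (forall F, facet X F <-> F \in s) &
      (forall p, 0 < p < size s ->
         exists v : T,
           nth set0 s p :\: \bigcup_(j < p) nth set0 s j = [set v] /\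
           exists2 j, j < p & nth set0 s p :\ v \subset nth set0 s j)].

Definition stacked (T : finType) (X : {set {set T}}) (d : nat) : Prop :=
  [/\ is_complex X, pure X d & exists s, stacking_order X s].

Definition free_vertex (T : finType) (s : seq {set T}) (F : {set T}) (v : T) : Prop :=
  v \in F /\ v \notin \bigcup_(j < index F s) nth set0 s j.

Definition walk (T : finType) (X : {set {set T}}) (d : nat) (w : seq {set T}) : Prop :=
  [/\ w != [::], all (facet X) w &
      forall i, i.+1 < size w -> #|nth set0 w i :&: nth set0 w i.+1| = d].

Definition cpath (T : finType) (X : {set {set T}}) (d : nat) (w : seq {set T}) : Prop :=
  walk X d w /\
  uniq [seq nth set0 w i :&: nth set0 w i.+1 | i <- iota 0 (size w).-1].

(* The facet f that comes last in the stacking order contains its free vertex v,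
   which lies in no earlier facet, hence in no other facet of the path.  So every
   path-neighbour g of f meets f in exactly f minus v (both have d elements).  If f
   had a neighbour on each side, the two consecutive intersections at f would both
   equal f minus v, which a path forbids; so f is an endpoint, and f minus its
   neighbour is {v}. *)
From mathcomp Require Import all_boot.

Set Implicit Arguments.
Unset Strict Implicit.
Unset Printing Implicit Defensive.

Lemma setD_eq_set1 (T : finType) (f g : {set T}) (v : T) :
  v \in f -> v \notin g -> g :&: f = f :\ v -> f :\: g = [set v].
Proof.
move=> vf vg /setP gf; apply/setP=> x; have := gf x; rewrite !inE.
case: eqP => [->|_] /=; first by rewrite vf (negbTE vg).
by case: (x \in f); rewrite ?andbT ?andbF //= => ->.
Qed.

Lemma setI_eq_setD1 (T : finType) (f g : {set T}) (v : T) (d : nat) :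
  #|f| = d.+1 -> v \in f -> v \notin g -> #|g :&: f| = d -> g :&: f = f :\ v.
Proof.
move=> cf vf vg cgf; apply/eqP; rewrite eqEcard cgf.
have -> : #|f :\ v| = d by move: cf; rewrite (cardsD1 v f) vf add1n => -[].
rewrite leqnn andbT; apply/subsetP=> x; rewrite !inE => /andP [xg ->].
by rewrite andbT; apply: contraNneq vg => <-.
Qed.

Lemma free_vertex_notin_earlier (T : finType) (s : seq {set T}) (f g : {set T}) (v : T) :
  g \in s -> index g s < index f s -> free_vertex s f v -> v \notin g.
Proof.
move=> gs lt_gf [_ vnot]; apply: contra vnot => vg.
by apply/bigcupP; exists (Ordinal lt_gf) => //=; rewrite nth_index.
Qed.

Lemma cpath_meet_neq (T : finType) (X : {set {set T}}) (d : nat) (w : seq {set T}) (i : nat) :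
  cpath X d w -> i.+2 < size w ->
  nth set0 w i :&: nth set0 w i.+1 != nth set0 w i.+1 :&: nth set0 w i.+2.
Proof.
move=> [_ uw] lt_iw.
have lt_i : i.+1 < (size w).-1 by rewrite -ltnS prednK // (leq_trans _ lt_iw).
set L := map _ _ in uw.
have sL : size L = (size w).-1 by rewrite size_map size_iota.
have := @nth_uniq _ set0 L i i.+1; rewrite sL => /(_ (ltnW lt_i) lt_i uw).
rewrite !(nth_map 0) ?size_iota ?(ltnW lt_i) // !nth_iota ?(ltnW lt_i) //=.
by move=> ->; rewrite eqn_leq ltnn andbF.
Qed.

Section LastFacetOfPath.

Variables (T : finType) (X : {set {set T}}) (d : nat) (s w : seq {set T}).
Hypotheses (pX : pure X d) (sX : stacking_order X s) (wX : walk X d w).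
Variables (f : {set T}) (v : T).
Hypotheses (fw : f \in w) (f_last : forall g, g \in w -> index g s <= index f s).
Hypothesis (fv : free_vertex s f v).

Let facet_of_walk g : g \in w -> facet X g.
Proof. by case: wX => _ /allP allw _; apply: allw. Qed.

Let in_stacking g : g \in w -> g \in s.
Proof. by case: sX => _ Hs _ gw; apply/Hs/facet_of_walk. Qed.

Lemma free_vertex_notin_path g : g \in w -> g != f -> v \notin g.
Proof.
move=> gw gf; apply: free_vertex_notin_earlier (in_stacking gw) _ fv.
rewrite ltn_neqAle f_last // andbT; apply: contra gf => /eqP eq_idx.
by rewrite -(nth_index set0 (in_stacking gw)) eq_idx nth_index // in_stacking.
Qed.

Let neq_last_facet g : #|g :&: f| = d -> g != f.
Proof.
move=> cgf; apply/eqP=> gf; move: cgf.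
by rewrite gf setIid (pX (facet_of_walk fw)) => /esym /n_Sn.
Qed.

Lemma meet_last_facet g : g \in w -> #|g :&: f| = d -> g :&: f = f :\ v.
Proof.
move=> gw cgf; have vg := free_vertex_notin_path gw (neq_last_facet cgf).
exact: setI_eq_setD1 (pX (facet_of_walk fw)) fv.1 vg cgf.
Qed.

Lemma diff_last_facet g : g \in w -> #|g :&: f| = d -> f :\: g = [set v].
Proof.
move=> gw cgf; have vg := free_vertex_notin_path gw (neq_last_facet cgf).
exact: setD_eq_set1 fv.1 vg (meet_last_facet gw cgf).
Qed.

Lemma last_facet_not_interior j :
  cpath X d w -> j.+2 < size w -> nth set0 w j.+1 != f.
Proof.
move=> wP lt_jw; apply/eqP=> f_at; have [_ _ meet] := wX.
have lt_j1w := ltnW lt_jw; have lt_j0w := ltnW lt_j1w.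
have meet_prev : nth set0 w j :&: f = f :\ v.
  by apply: meet_last_facet; rewrite ?mem_nth // -f_at meet.
have meet_next : nth set0 w j.+2 :&: f = f :\ v.
  by apply: meet_last_facet; rewrite ?mem_nth // setIC -f_at meet.
have := cpath_meet_neq wP lt_jw.
by rewrite f_at [f :&: _]setIC meet_prev meet_next eqxx.
Qed.

End LastFacetOfPath.

Theorem lemma2p5 (T : finType) (X : {set {set T}}) (d : nat)
  (s : seq {set T}) (w : seq {set T}) :
  is_complex X -> pure X d -> stacking_order X s ->
  cpath X d w -> 2 <= size w ->
  forall f : {set T}, f \in w ->
  (forall g, g \in w -> index g s <= index f s) ->
  forall v : T, free_vertex s f v ->
  (f = nth set0 w 0 /\ [set v] = nth set0 w 0 :\: nth set0 w 1) \/
  (f = nth set0 w (size w).-1 /\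
   [set v] = nth set0 w (size w).-1 :\: nth set0 w (size w).-2).
Proof.
move=> _ pX sX wP w2 f fw f_last v fv; have [wX _] := wP; have [_ _ meet] := wX.
have diff := diff_last_facet pX sX wX fw f_last fv.
have f_at : nth set0 w (index f w) = f by rewrite nth_index.
have lt_fw : index f w < size w by rewrite index_mem.
case: (index f w) f_at lt_fw => [|j] f_at lt_fw.
  left; rewrite f_at; split=> //; rewrite diff ?mem_nth //.
  by rewrite setIC -f_at meet.
have [lt_jw|] := ltnP j.+2 (size w).
  by have := last_facet_not_interior pX sX wX fw f_last fv wP lt_jw; rewrite f_at eqxx.
move=> le_wj; have {le_wj} -> : size w = j.+2 by apply/eqP; rewrite eqn_leq le_wj.
right; rewrite /= f_at; split=> //; rewrite diff ?(mem_nth _ (ltnW lt_fw)) //.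
by rewrite -f_at meet.
Qed.
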